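(* Let $\hat T>0$, $\varepsilon_0\in(0,1)$ and $\hat c_0>0$ be constants, let $(x(t),y(t))$ be any trajectory of system (5), let $0\le t_0\le t_1$, and let $\mathcal V^1_F\subseteq\mathcal V_F$ be nonempty. Suppose that in the joint graph $\mathcal G([t_1,t_1+\hat T))$ there is no arc leaving from a node of $\mathcal V_F\setminus\mathcal V^1_F$ and entering a node of $\mathcal V^1_F$, and that $|x_i(t_1)|_{\mathcal L(y(t_1))}\le\varepsilon_0|x(t_0)|_{\mathcal L(y(t_0))}+\hat c_0$ for all $i\in\mathcal V^1_F$. Then for all $i\in\mathcal V^1_F$ and all $t\in[t_1,t_1+\hat T]$, $$|x_i(t)|_{\mathcal L(y(t))}\le\varepsilon_0|x(t_0)|_{\mathcal L(y(t_0))}+\hat c_0+\sqrt2\int_{t_1}^{t}|z(s)|\,ds.$$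
   Context: Standing setup. Fix integers $n\ge 2$, $k\ge 1$, $d\ge 1$. The follower set is $\mathcal V_F=\{1,\dots,n\}$ and the leader set is $\mathcal V_L=\{\hat 1,\dots,\hat k\}$ (disjoint from $\mathcal V_F$); $\mathcal V=\mathcal V_F\cup\mathcal V_L$. The interaction topology is a time-varying digraph $\mathcal G_{\sigma(t)}=(\mathcal V,\mathcal E_{\sigma(t)})$, where $\sigma:[0,\infty)\to\mathcal P$ is a piecewise constant switching signal taking values in a finite set $\mathcal P$ of digraphs on $\mathcal V$; no arc of any of these digraphs enters a leader. An arc $(j,i)$ means that $i$ receives information from $j$. Dwell-time assumption: any two consecutive switching instants of $\sigma$ are separated by at least $\tau_D>0$. For $i\in\mathcal V_F$, $N_i(\sigma(t))=\{j\in\mathcal V_F:(j,i)\in\mathcal E_{\sigma(t)}\}$ and $L_i(\sigma(t))=\{j\in\mathcal V_L:(j,i)\in\mathcal E_{\sigma(t)}\}$. For $0\le t_1<t_2\le\infty$ the joint graph is $\mathcal G([t_1,t_2))=(\mathcal V,\bigcup_{t\in[t_1,t_2)}\mathcal E_{\sigma(t)})$. System (5): $\dot y_i=u_i(y,t)$ for $i=1,\dots,k$, and $\dot x_i=\sum_{j\in N_i(\sigma(t))}a_{ij}(x,y,t)(x_j-x_i)+\sum_{j\in L_i(\sigma(t))}b_{ij}(x,y,t)(y_j-x_i)+w_i(t)$ for $i=1,\dots,n$, where $x_i,y_j\in\mathbb R^d$, $x=(x_1,\dots,x_n)$, $y=(y_1,\dots,y_k)$; each $u_i(y,t)$ is continuous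 in $y$ and piecewise continuous in $t$; each $w_i$ is continuous; the weights $a_{ij},b_{ij}$ are continuous and satisfy $a_*\le a_{ij}(x,y,t)\le a^*$, $b_{ij}(x,y,t)\ge b_*$ for all $x,y,t$, with constants $0<a_*\le a^*$, $b_*>0$. Along a trajectory, $z(t)=(u_1(y(t),t),\dots,u_k(y(t),t),w_1(t),\dots,w_n(t))\in\mathbb R^{(n+k)d}$. Set notation: $|\cdot|$ is the Euclidean norm; for a closed convex $K\subset\mathbb R^d$, $|v|_K=\inf_{p\in K}|v-p|$; $\mathcal L(y(t))=\mathrm{co}\{y_1(t),\dots,y_k(t)\}$ (convex hull); $|x(t)|_{\mathcal L(y(t))}=\max_{i\in\mathcal V_F}|x_i(t)|_{\mathcal L(y(t))}$. *)

From Stdlib Require Import Reals Lra List ClassicalEpsilon.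
Open Scope R_scope.

(* Vectors of R^d are functions nat -> R (only coordinates c < d       *)
(* matter).  A state of the n followers is X : nat -> nat -> R with    *)
(* X i c = c-th coordinate of x_i; similarly for the k leaders.        *)

Fixpoint fsum (m : nat) (f : nat -> R) : R :=
  match m with
  | O => 0
  | S m' => fsum m' f + f m'
  end.

(* finite max  max(f 0, ..., f (m-1)), used with m >= 1 and f >= 0 *)
Fixpoint fmax (m : nat) (f : nat -> R) : R :=
  match m with
  | O => 0
  | S m' => Rmax (fmax m' f) (f m')
  end.

Definition normd (d : nat) (v : nat -> R) : R :=
  sqrt (fsum d (fun c => (v c) ^ 2)).

Definition in_hull (k d : nat) (Y : nat -> nat -> R) (p : nat -> R) : Prop :=
  exists lam : nat -> R,
    (forall j, (j < k)%nat -> 0 <= lam j) /\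
    fsum k lam = 1 /\
    (forall c, (c < d)%nat -> p c = fsum k (fun j => lam j * Y j c)).

Definition is_inf (S : R -> Prop) (m : R) : Prop :=
  (forall r, S r -> m <= r) /\
  (forall m', (forall r, S r -> m' <= r) -> m' <= m).

Definition hull_dist (k d : nat) (Y : nat -> nat -> R) (v : nat -> R) : R :=
  epsilon (inhabits 0)
    (is_inf (fun r => exists p, in_hull k d Y p /\
                                r = normd d (fun c => v c - p c))).

Definition max_hull_dist (n k d : nat) (X Y : nat -> nat -> R) : R :=
  fmax n (fun i => hull_dist k d Y (X i)).

Definition locally_finite (E : R -> Prop) : Prop :=
  forall b, exists l : list R, forall t, E t -> 0 <= t <= b -> In t l.

Definition cont_nonneg (f : R -> R) : Prop :=
  forall t eps, 0 <= t -> 0 < eps ->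
    exists delta, 0 < delta /\
      forall s, 0 <= s -> Rabs (s - t) < delta -> Rabs (f s - f t) < eps.

Definition piecewise_cont (f : R -> R) : Prop :=
  forall b, exists l : list R,
    forall t, 0 <= t <= b -> ~ In t l -> continuity_pt f t.

Definition cont_state (n k d : nat)
  (f : (nat -> nat -> R) -> (nat -> nat -> R) -> R -> R) : Prop :=
  forall X Y t eps, 0 < eps ->
    exists delta, 0 < delta /\
      forall X' Y' t',
        Rabs (t' - t) < delta ->
        (forall i c, (i < n)%nat -> (c < d)%nat -> Rabs (X' i c - X i c) < delta) ->
        (forall j c, (j < k)%nat -> (c < d)%nat -> Rabs (Y' j c - Y j c) < delta) ->
        Rabs (f X' Y' t' - f X Y t) < eps.

Definition cont_in_y (k d : nat)
  (f : (nat -> nat -> R) -> R -> nat -> R) : Prop :=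
  forall Y t eps, 0 < eps ->
    exists delta, 0 < delta /\
      forall Y',
        (forall j c, (j < k)%nat -> (c < d)%nat -> Rabs (Y' j c - Y j c) < delta) ->
        forall c, (c < d)%nat -> Rabs (f Y' t c - f Y t c) < eps.

Definition switching_signal (p : nat) (tauD : R) (sigma : R -> nat) : Prop :=
  (forall t, 0 <= t -> (sigma t < p)%nat) /\
  exists sw : nat -> R,
    sw O = 0 /\
    (forall m, sw (S m) - sw m >= tauD) /\
    (forall m t, sw m <= t < sw (S m) -> sigma t = sigma (sw m)).

(* Digraphs of P: GF q j i = true iff arc (follower j, follower i) is   *)
(* in graph q;  GL q j i = true iff arc (leader j, follower i) is in    *)
(* graph q.  (No arc enters a leader, so these are all the arcs.)       *)
Definition follower_rhs (n k : nat)
  (GF GL : nat -> nat -> nat -> bool) (sigma : R -> nat)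
  (a : nat -> nat -> (nat -> nat -> R) -> (nat -> nat -> R) -> R -> R)
  (b : nat -> nat -> (nat -> nat -> R) -> (nat -> nat -> R) -> R -> R)
  (w : nat -> R -> nat -> R)
  (X Y : nat -> nat -> R) (t : R) (i c : nat) : R :=
  fsum n (fun j => if GF (sigma t) j i then a i j X Y t * (X j c - X i c) else 0)
  + fsum k (fun j => if GL (sigma t) j i then b i j X Y t * (Y j c - X i c) else 0)
  + w i t c.

(* (x, y) is a trajectory of system (5) on [0, infinity): continuous, and
   the differential equations hold at every t > 0 outside a locally finite
   set of exceptional times (switching instants / discontinuities in t). *)
Definition is_trajectory (n k d : nat)
  (GF GL : nat -> nat -> nat -> bool) (sigma : R -> nat)
  (u : nat -> (nat -> nat -> R) -> R -> nat -> R)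
  (a b : nat -> nat -> (nat -> nat -> R) -> (nat -> nat -> R) -> R -> R)
  (w : nat -> R -> nat -> R)
  (x y : R -> nat -> nat -> R) : Prop :=
  (forall i c, (i < n)%nat -> (c < d)%nat -> cont_nonneg (fun t => x t i c)) /\
  (forall j c, (j < k)%nat -> (c < d)%nat -> cont_nonneg (fun t => y t j c)) /\
  exists E : R -> Prop, locally_finite E /\
    forall t, 0 < t -> ~ E t ->
      (forall j c, (j < k)%nat -> (c < d)%nat ->
         derivable_pt_lim (fun s => y s j c) t (u j (y t) t c)) /\
      (forall i c, (i < n)%nat -> (c < d)%nat ->
         derivable_pt_lim (fun s => x s i c) t
           (follower_rhs n k GF GL sigma a b w (x t) (y t) t i c)).

(* |z(s)| with z = (u_1(y,s), ..., u_k(y,s), w_1(s), ..., w_n(s)) *)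
Definition z_norm (n k d : nat)
  (u : nat -> (nat -> nat -> R) -> R -> nat -> R)
  (w : nat -> R -> nat -> R) (y : R -> nat -> nat -> R) (s : R) : R :=
  sqrt (fsum k (fun j => fsum d (fun c => (u j (y s) s c) ^ 2))
        + fsum n (fun i => fsum d (fun c => (w i s c) ^ 2))).

From Stdlib Require Import Reals Lra Lia Psatz List ClassicalEpsilon FunctionalExtensionality.
Open Scope R_scope.

(* Let L(s) be the largest distance |x_i(s)|_{co y(s)} over i in V^1_F.
   1. Each |.|_{co Y} is a distance to a convex set: it vanishes at the
      vertices, is 1-Lipschitz in the point and in the vertices, and does
      not exceed the weighted average of its values along a convex step
      v + sum_m g_m (q_m - v) + e, up to |e|.
   2. An Euler step x_i + h * rhs_i of system (5) is such a convex step
      when h is small; its neighbours lie in V^1_F (no entering arc) or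
      are leaders (distance 0), so it raises L by at most h |w_i|.
   3. Hence L is continuous and, outside the locally finite exceptional
      set, its upper right Dini derivative is at most |u| + |w| <=
      sqrt 2 |z|.
   4. A comparison principle (a continuous function whose right Dini
      derivative is bounded by K G outside finitely many points grows by at
      most K times the Riemann integral of G) integrates this bound from
      t1, where the hypothesis bounds L(t1). *)

(* ** Finite sums and maxima *)

Lemma fsum_ext m f g : (forall i, (i < m)%nat -> f i = g i) -> fsum m f = fsum m g.
Proof.
  induction m as [|m IH]; simpl; intros H; [reflexivity|].
  rewrite IH by (intros; apply H; lia). rewrite H by lia. reflexivity.
Qed.

Lemma fsum_le m f g : (forall i, (i < m)%nat -> f i <= g i) -> fsum m f <= fsum m g.
Proof.
  induction m as [|m IH]; simpl; intros H; [lra|].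
  apply Rplus_le_compat; [apply IH; intros; apply H; lia | apply H; lia].
Qed.

Lemma fsum_add m f g : fsum m (fun i => f i + g i) = fsum m f + fsum m g.
Proof. induction m as [|m IH]; simpl; [lra|]. rewrite IH; lra. Qed.

Lemma fsum_scal m c f : fsum m (fun i => c * f i) = c * fsum m f.
Proof. induction m as [|m IH]; simpl; [lra|]. rewrite IH; lra. Qed.

Lemma fsum_const m r : fsum m (fun _ => r) = INR m * r.
Proof. induction m as [|m IH]; simpl fsum; [simpl; lra|]. rewrite IH, S_INR; lra. Qed.

Lemma fsum_nonneg m f : (forall i, (i < m)%nat -> 0 <= f i) -> 0 <= fsum m f.
Proof. intros H. rewrite <- (Rmult_0_r (INR m)), <- fsum_const. apply fsum_le; auto. Qed.

Lemma fsum_term_le m f i :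
  (forall j, (j < m)%nat -> 0 <= f j) -> (i < m)%nat -> f i <= fsum m f.
Proof.
  induction m as [|m IH]; simpl; intros H Hi; [lia|].
  destruct (Nat.eq_dec i m) as [->|Hne].
  - assert (0 <= fsum m f) by (apply fsum_nonneg; intros; apply H; lia). lra.
  - assert (f i <= fsum m f) by (apply IH; [intros; apply H; lia | lia]).
    specialize (H m ltac:(lia)). lra.
Qed.

Lemma fsum_swap m1 m2 (f : nat -> nat -> R) :
  fsum m1 (fun i => fsum m2 (fun j => f i j)) = fsum m2 (fun j => fsum m1 (fun i => f i j)).
Proof.
  induction m1 as [|m1 IH]; simpl.
  - rewrite fsum_const; lra.
  - rewrite IH, <- fsum_add. reflexivity.
Qed.

Lemma fsum_split n k f : fsum (n + k) f = fsum n f + fsum k (fun j => f (n + j)%nat).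
Proof.
  induction k as [|k IH]; simpl.
  - rewrite Nat.add_0_r; lra.
  - rewrite Nat.add_succ_r; simpl. rewrite IH; lra.
Qed.

Lemma fsum_indicator k j (Y : nat -> R) : (j < k)%nat ->
  fsum k (fun l => (if Nat.eqb l j then 1 else 0) * Y l) = Y j.
Proof.
  intros Hj. induction k as [|k IH]; [lia|]. simpl.
  destruct (Nat.eqb_spec k j) as [->|Hne].
  - rewrite (fsum_ext _ _ (fun _ => 0)), fsum_const; [lra|].
    intros i Hi. destruct (Nat.eqb_spec i j); [lia|lra].
  - rewrite IH by lia. lra.
Qed.

Lemma fmax_ge m f i : (i < m)%nat -> f i <= fmax m f.
Proof.
  induction m as [|m IH]; simpl; intros Hi; [lia|].
  destruct (Nat.eq_dec i m) as [->|Hne]; [apply Rmax_r|].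
  eapply Rle_trans; [apply IH; lia | apply Rmax_l].
Qed.

Lemma fmax_nonneg m f : 0 <= fmax m f.
Proof. induction m; simpl; [lra|]. eapply Rle_trans; [eassumption | apply Rmax_l]. Qed.

Lemma fmax_le m f C : 0 <= C -> (forall i, (i < m)%nat -> f i <= C) -> fmax m f <= C.
Proof.
  induction m as [|m IH]; simpl; intros HC H; [lra|].
  apply Rmax_lub; [apply IH; auto | apply H; lia].
Qed.

Lemma fmax_diff m f g r : 0 <= r ->
  (forall i, (i < m)%nat -> Rabs (f i - g i) <= r) -> Rabs (fmax m f - fmax m g) <= r.
Proof.
  intros Hr H. apply Rabs_le. split.
  - assert (fmax m g <= fmax m f + r); [|lra].
    apply fmax_le; [pose proof (fmax_nonneg m f); lra|]. intros i Hi.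
    assert (f i <= fmax m f) by (apply fmax_ge; auto).
    assert (g i - f i <= r) by (eapply Rle_trans; [apply Rle_abs | rewrite Rabs_minus_sym; apply H; auto]).
    lra.
  - assert (fmax m f <= fmax m g + r); [|lra].
    apply fmax_le; [pose proof (fmax_nonneg m g); lra|]. intros i Hi.
    assert (g i <= fmax m g) by (apply fmax_ge; auto).
    assert (f i - g i <= r) by (eapply Rle_trans; [apply Rle_abs | apply H; auto]).
    lra.
Qed.

(* ** Euclidean norms on R^d and on (R^d)^m *)

Lemma normd_nonneg d v : 0 <= normd d v.
Proof. apply sqrt_pos. Qed.

Lemma normd_ext d u v : (forall c, (c < d)%nat -> u c = v c) -> normd d u = normd d v.
Proof. intros H; unfold normd; f_equal; apply fsum_ext; intros; rewrite H; auto. Qed.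

Lemma fsum_squares_nonneg d (v : nat -> R) : 0 <= fsum d (fun c => v c ^ 2).
Proof. apply fsum_nonneg; intros; nra. Qed.

Lemma normd_S d v : normd (S d) v = sqrt (normd d v ^ 2 + v d ^ 2).
Proof. unfold normd at 2. rewrite pow2_sqrt by apply fsum_squares_nonneg. reflexivity. Qed.

Lemma normd_zero d : normd d (fun _ => 0) = 0.
Proof.
  unfold normd. rewrite (fsum_ext _ _ (fun _ => 0)) by (intros; ring).
  rewrite fsum_const, Rmult_0_r. apply sqrt_0.
Qed.

(* Triangle inequality in the plane, for the inductive proof of Minkowski. *)
Lemma plane_triangle A B x y : 0 <= A -> 0 <= B ->
  sqrt ((A + B)^2 + (x + y)^2) <= sqrt (A^2 + x^2) + sqrt (B^2 + y^2).
Proof.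
  intros HA HB.
  set (P := A^2 + x^2). set (Q := B^2 + y^2).
  assert (HP : sqrt P ^ 2 = P) by (apply pow2_sqrt; unfold P; nra).
  assert (HQ : sqrt Q ^ 2 = Q) by (apply pow2_sqrt; unfold Q; nra).
  pose proof (sqrt_pos P). pose proof (sqrt_pos Q).
  (* Cauchy-Schwarz: A B + x y <= sqrt P * sqrt Q *)
  assert (HCS : A * B + x * y <= sqrt P * sqrt Q).
  { destruct (Rle_or_lt (A * B + x * y) 0) as [Hle|Hlt]; [nra|].
    assert (0 <= sqrt P * sqrt Q) by (apply Rmult_le_pos; lra).
    assert ((A * B + x * y)^2 <= (sqrt P * sqrt Q)^2); [|nra].
    rewrite Rpow_mult_distr, HP, HQ. unfold P, Q.
    assert (0 <= (A * y - B * x)^2) by apply pow2_ge_0. nra. }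
  rewrite <- (sqrt_pow2 (sqrt P + sqrt Q)) by lra. apply sqrt_le_1_alt.
  replace ((sqrt P + sqrt Q)^2) with (sqrt P ^ 2 + sqrt Q ^ 2 + 2 * (sqrt P * sqrt Q)) by ring.
  rewrite HP, HQ. unfold P, Q in *. nra.
Qed.

Lemma normd_triangle d u v : normd d (fun c => u c + v c) <= normd d u + normd d v.
Proof.
  induction d as [|d IH].
  - unfold normd; simpl. rewrite sqrt_0. lra.
  - rewrite !normd_S.
    pose proof (normd_nonneg d (fun c => u c + v c)).
    pose proof (normd_nonneg d u). pose proof (normd_nonneg d v).
    eapply Rle_trans; [|apply plane_triangle; auto].
    apply sqrt_le_1_alt. apply Rplus_le_compat_r. apply pow_incr. lra.
Qed.

Lemma normd_scal d a u : normd d (fun c => a * u c) = Rabs a * normd d u.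
Proof.
  unfold normd. rewrite (fsum_ext _ _ (fun c => a^2 * u c ^2)) by (intros; ring).
  rewrite fsum_scal, sqrt_mult by (try apply fsum_squares_nonneg; apply pow2_ge_0).
  rewrite <- sqrt_Rsqr_abs. unfold Rsqr. do 2 f_equal. ring.
Qed.

Lemma normd_comb d N (g : nat -> R) (u : nat -> nat -> R) :
  (forall m, (m < N)%nat -> 0 <= g m) ->
  normd d (fun c => fsum N (fun m => g m * u m c)) <= fsum N (fun m => g m * normd d (u m)).
Proof.
  induction N as [|N IH]; intros Hg; simpl.
  - rewrite normd_zero; lra.
  - eapply Rle_trans; [apply normd_triangle|].
    rewrite normd_scal, Rabs_right by (apply Rle_ge, Hg; lia).
    assert (normd d (fun c => fsum N (fun m => g m * u m c)) <= fsum N (fun m => g m * normd d (u m)))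
      by (apply IH; intros; apply Hg; lia).
    lra.
Qed.

Lemma normd_coord_bound d u r :
  (forall c, (c < d)%nat -> Rabs (u c) <= r) -> normd d u <= INR d * r.
Proof.
  intros H. apply Rle_trans with (fsum d (fun c => Rabs (u c))).
  - clear H. induction d as [|d IH].
    + unfold normd; simpl; rewrite sqrt_0; lra.
    + rewrite normd_S. simpl fsum. pose proof (normd_nonneg d u). pose proof (Rabs_pos (u d)).
      apply Rle_trans with (normd d u + Rabs (u d)); [|lra].
      rewrite <- (sqrt_pow2 (normd d u + Rabs (u d))) by lra. apply sqrt_le_1_alt.
      rewrite <- (pow2_abs (u d)). nra.
  - rewrite <- fsum_const. apply fsum_le; auto.
Qed.

Lemma normd_sym d u v : normd d (fun c => u c - v c) = normd d (fun c => v c - u c).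
Proof. unfold normd. f_equal. apply fsum_ext. intros; ring. Qed.

Lemma normd_coord d u c : (c < d)%nat -> Rabs (u c) <= normd d u.
Proof.
  intros Hc. unfold normd. rewrite <- sqrt_Rsqr_abs. apply sqrt_le_1_alt.
  unfold Rsqr. replace (u c * u c) with (u c ^ 2) by ring.
  apply (fsum_term_le d (fun c => u c ^ 2)); auto. intros; apply pow2_ge_0.
Qed.

Definition mat_norm (m d : nat) (Z : nat -> nat -> R) : R :=
  sqrt (fsum m (fun j => fsum d (fun c => Z j c ^ 2))).

Lemma mat_norm_rows m d Z : mat_norm m d Z = normd m (fun j => normd d (Z j)).
Proof.
  unfold mat_norm, normd at 1. f_equal. apply fsum_ext; intros.
  unfold normd. rewrite pow2_sqrt by apply fsum_squares_nonneg. reflexivity.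
Qed.

Lemma mat_norm_ext m d Z Z' :
  (forall j c, (j < m)%nat -> (c < d)%nat -> Z j c = Z' j c) -> mat_norm m d Z = mat_norm m d Z'.
Proof. intros H. unfold mat_norm. f_equal. apply fsum_ext. intros. apply fsum_ext. intros. rewrite H; auto. Qed.

Lemma mat_norm_triangle m d Z1 Z2 :
  mat_norm m d (fun j c => Z1 j c + Z2 j c) <= mat_norm m d Z1 + mat_norm m d Z2.
Proof.
  rewrite !mat_norm_rows. eapply Rle_trans; [|apply normd_triangle].
  unfold normd at 1 3. apply sqrt_le_1_alt. apply fsum_le. intros j Hj. apply pow_incr.
  split; [apply normd_nonneg | apply normd_triangle].
Qed.

Lemma mat_norm_scal m d a Z : mat_norm m d (fun j c => a * Z j c) = Rabs a * mat_norm m d Z.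
Proof.
  rewrite !mat_norm_rows, <- (Rabs_Rabsolu a), <- normd_scal.
  apply normd_ext; intros; apply normd_scal.
Qed.

Lemma mat_norm_row m d Z j : (j < m)%nat -> normd d (Z j) <= mat_norm m d Z.
Proof.
  intros Hj. rewrite mat_norm_rows. eapply Rle_trans; [apply Rle_abs|].
  apply (normd_coord m (fun j => normd d (Z j)) j Hj).
Qed.

Lemma mat_norm_coord_bound m d Z r :
  (forall j c, (j < m)%nat -> (c < d)%nat -> Rabs (Z j c) <= r) -> mat_norm m d Z <= INR m * (INR d * r).
Proof.
  intros H. rewrite mat_norm_rows. apply normd_coord_bound. intros j Hj.
  rewrite Rabs_right by (apply Rle_ge, normd_nonneg). apply normd_coord_bound; auto.
Qed.

Lemma mat_norm_sym m d Y1 Y2 :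
  mat_norm m d (fun j c => Y1 j c - Y2 j c) = mat_norm m d (fun j c => Y2 j c - Y1 j c).
Proof. unfold mat_norm. f_equal. apply fsum_ext. intros. apply fsum_ext. intros; ring. Qed.

Lemma increment_norm_bound m d (Z Z' U : nat -> nat -> R) h r : 0 <= h ->
  (forall j c, (j < m)%nat -> (c < d)%nat -> Rabs (Z' j c - Z j c - h * U j c) <= r) ->
  mat_norm m d (fun j c => Z' j c - Z j c) <= h * mat_norm m d U + INR m * (INR d * r).
Proof.
  intros Hh H.
  rewrite (mat_norm_ext m d _ (fun j c => h * U j c + (Z' j c - Z j c - h * U j c))) by (intros; ring).
  eapply Rle_trans; [apply mat_norm_triangle|]. rewrite mat_norm_scal, Rabs_right by lra.
  apply Rplus_le_compat_l. apply mat_norm_coord_bound; auto.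
Qed.

(* |a| + |b| <= sqrt 2 |(a, b)|: the source of the factor sqrt 2. *)
Lemma sqrt_add_le P Q : 0 <= P -> 0 <= Q -> sqrt P + sqrt Q <= sqrt 2 * sqrt (P + Q).
Proof.
  intros HP HQ. rewrite <- sqrt_mult by lra.
  pose proof (sqrt_pos P). pose proof (sqrt_pos Q).
  rewrite <- (sqrt_pow2 (sqrt P + sqrt Q)) by lra. apply sqrt_le_1_alt.
  assert (0 <= (sqrt P - sqrt Q)^2) by apply pow2_ge_0.
  assert (sqrt P ^ 2 = P) by (apply pow2_sqrt; lra). assert (sqrt Q ^ 2 = Q) by (apply pow2_sqrt; lra).
  nra.
Qed.

(* ** Distance to the convex hull of k >= 1 points *)

Lemma in_hull_vertex k d Y j : (j < k)%nat -> in_hull k d Y (Y j).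
Proof.
  intros Hj. exists (fun l => if Nat.eqb l j then 1 else 0). repeat split.
  - intros l _. destruct (Nat.eqb l j); lra.
  - rewrite (fsum_ext _ _ (fun l => (if Nat.eqb l j then 1 else 0) * 1)) by (intros; ring).
    apply (fsum_indicator k j (fun _ => 1) Hj).
  - intros c _. symmetry. apply (fsum_indicator k j (fun l => Y l c) Hj).
Qed.

Section HullDistance.
Variables (k d : nat) (Hk : (1 <= k)%nat).

Definition hull_dists (Y : nat -> nat -> R) (v : nat -> R) : R -> Prop :=
  fun r => exists p, in_hull k d Y p /\ r = normd d (fun c => v c - p c).

(* The hull is nonempty, so the infimum exists and hull_dist is it. *)
Lemma hull_dist_spec Y v : is_inf (hull_dists Y v) (hull_dist k d Y v).
Proof.
  unfold hull_dist. apply epsilon_spec.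
  set (E := fun m => forall r, hull_dists Y v r -> m <= r).
  assert (Hb : bound E).
  { exists (normd d (fun c => v c - Y 0%nat c)). intros m Hm. apply Hm.
    exists (Y 0%nat). split; auto. apply in_hull_vertex; lia. }
  assert (He : exists m, E m) by (exists 0; intros r [p [_ ->]]; apply normd_nonneg).
  destruct (completeness E Hb He) as [m [Hm1 Hm2]].
  exists m. split.
  - intros r Hr. apply Hm2. intros m' Hm'. apply Hm', Hr.
  - intros m' Hm'. apply Hm1. exact Hm'.
Qed.

Lemma hull_dist_le Y v p : in_hull k d Y p -> hull_dist k d Y v <= normd d (fun c => v c - p c).
Proof. intros Hp. apply (proj1 (hull_dist_spec Y v)). exists p; auto. Qed.

Lemma hull_dist_nonneg Y v : 0 <= hull_dist k d Y v.
Proof. apply (proj2 (hull_dist_spec Y v)). intros r [p [_ ->]]. apply normd_nonneg. Qed.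

Lemma hull_dist_vertex Y j : (j < k)%nat -> hull_dist k d Y (Y j) = 0.
Proof.
  intros Hj. apply Rle_antisym; [|apply hull_dist_nonneg].
  eapply Rle_trans; [apply hull_dist_le, in_hull_vertex, Hj|].
  rewrite (normd_ext _ _ (fun _ => 0)) by (intros; ring). rewrite normd_zero; lra.
Qed.

Lemma hull_dist_near_weights Y v eps : 0 < eps -> exists lam : nat -> R,
  ((forall j, (j < k)%nat -> 0 <= lam j) /\ fsum k lam = 1) /\
  normd d (fun c => v c - fsum k (fun j => lam j * Y j c)) < hull_dist k d Y v + eps.
Proof.
  intros He. destruct (hull_dist_spec Y v) as [_ Hglb].
  destruct (Classical_Prop.classic
    (exists r, hull_dists Y v r /\ r < hull_dist k d Y v + eps))
    as [[r [[p [[lam [L1 [L2 L3]]] ->]] Hr]]|Hn].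
  - exists lam. split; [split; auto|]. rewrite (normd_ext _ _ (fun c => v c - p c)); auto.
    intros c Hc; rewrite L3; auto.
  - exfalso. assert (hull_dist k d Y v + eps <= hull_dist k d Y v); [|lra].
    apply Hglb. intros r Hr. destruct (Rle_or_lt (hull_dist k d Y v + eps) r); auto.
    exfalso; apply Hn; eauto.
Qed.

Lemma hull_dist_lip Y Y' v v' : hull_dist k d Y' v' <=
  hull_dist k d Y v + normd d (fun c => v' c - v c) + mat_norm k d (fun j c => Y' j c - Y j c).
Proof.
  apply Rle_plus_epsilon. intros eps He.
  destruct (hull_dist_near_weights Y v eps He) as [lam [[L1 L2] L3]].
  set (p' := fun c => fsum k (fun j => lam j * Y' j c)).
  assert (Hp' : in_hull k d Y' p') by (exists lam; repeat split; auto).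
  eapply Rle_trans; [apply (hull_dist_le _ _ _ Hp')|].
  rewrite (normd_ext d _ (fun c => ((v' c - v c) + (v c - fsum k (fun j => lam j * Y j c)))
     + fsum k (fun j => lam j * (Y j c - Y' j c)))).
  2:{ intros c _. unfold p'.
      rewrite (fsum_ext k (fun j => lam j * (Y j c - Y' j c))
                 (fun j => lam j * Y j c + (-1) * (lam j * Y' j c))) by (intros; ring).
      rewrite fsum_add, fsum_scal. ring. }
  eapply Rle_trans; [apply normd_triangle|].
  eapply Rle_trans; [apply Rplus_le_compat;
    [apply normd_triangle | apply (normd_comb d k lam (fun j c => Y j c - Y' j c) L1)]|].
  assert (fsum k (fun m => lam m * normd d (fun c => Y m c - Y' m c))
          <= mat_norm k d (fun j c => Y' j c - Y j c)).
  { rewrite <- (Rmult_1_l (mat_norm _ _ _)), <- L2, Rmult_comm, <- fsum_scal.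
    apply fsum_le. intros j Hj. rewrite (Rmult_comm (mat_norm _ _ _)).
    apply Rmult_le_compat_l; auto.
    rewrite mat_norm_sym. apply (mat_norm_row k d (fun j c => Y j c - Y' j c)); auto. }
  lra.
Qed.

Lemma hull_dist_diff Y Y' v v' : Rabs (hull_dist k d Y' v' - hull_dist k d Y v) <=
  normd d (fun c => v' c - v c) + mat_norm k d (fun j c => Y' j c - Y j c).
Proof.
  pose proof (hull_dist_lip Y Y' v v') as H1. pose proof (hull_dist_lip Y' Y v' v) as H2.
  rewrite (normd_sym d v v'), (mat_norm_sym k d Y Y') in H2. apply Rabs_le. lra.
Qed.

Lemma hull_dist_convex_step Y v (q : nat -> nat -> R) (g : nat -> R) N e :
  (forall m, (m < N)%nat -> 0 <= g m) -> fsum N g <= 1 ->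
  hull_dist k d Y (fun c => v c + fsum N (fun m => g m * (q m c - v c)) + e c)
  <= (1 - fsum N g) * hull_dist k d Y v
     + fsum N (fun m => g m * hull_dist k d Y (q m)) + normd d e.
Proof.
  intros Hg HG. apply Rle_plus_epsilon. intros eps He.
  set (G := fsum N g).
  destruct (hull_dist_near_weights Y v eps He) as [lv [[Lv1 Lv2] Lv3]].
  set (Near := fun m (lam : nat -> R) => ((forall j, (j < k)%nat -> 0 <= lam j) /\ fsum k lam = 1) /\
        normd d (fun c => q m c - fsum k (fun j => lam j * Y j c)) < hull_dist k d Y (q m) + eps).
  set (L := fun m => epsilon (inhabits (fun _ : nat => 0)) (Near m)).
  assert (HL : forall m, Near m (L m)) by (intros m; apply epsilon_spec, hull_dist_near_weights, He).
  (* the same convex step applied to the barycentric weights *)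
  set (lam := fun j => (1 - G) * lv j + fsum N (fun m => g m * L m j)).
  assert (Hlam : in_hull k d Y (fun c => fsum k (fun j => lam j * Y j c))).
  { exists lam. repeat split.
    - intros j Hj. unfold lam. apply Rplus_le_le_0_compat.
      + apply Rmult_le_pos; [unfold G; lra | auto].
      + apply fsum_nonneg. intros m Hm. apply Rmult_le_pos; auto. apply (proj1 (proj1 (HL m))); auto.
    - unfold lam. rewrite fsum_add, fsum_scal, Lv2, fsum_swap.
      rewrite (fsum_ext N _ g); [unfold G; ring|].
      intros m Hm. rewrite fsum_scal, (proj2 (proj1 (HL m))). ring. }
  eapply Rle_trans; [apply (hull_dist_le _ _ _ Hlam)|].
  rewrite (normd_ext d _ (fun c => ((1 - G) * (v c - fsum k (fun j => lv j * Y j c)) +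
       fsum N (fun m => g m * (q m c - fsum k (fun j => L m j * Y j c)))) + e c)).
  2:{ intros c _. unfold lam.
      rewrite (fsum_ext k _ (fun j => (1 - G) * (lv j * Y j c) + fsum N (fun m => g m * (L m j * Y j c)))).
      2:{ intros j _. rewrite Rmult_plus_distr_r. f_equal; [ring|].
          rewrite Rmult_comm, <- fsum_scal. apply fsum_ext; intros; ring. }
      rewrite fsum_add, fsum_scal, fsum_swap.
      rewrite (fsum_ext N (fun m => g m * (q m c - v c)) (fun m => g m * q m c + (- v c) * g m))
        by (intros; ring).
      rewrite (fsum_ext N (fun m => g m * (q m c - fsum k (fun j => L m j * Y j c)))
          (fun m => g m * q m c + (-1) * fsum k (fun j => g m * (L m j * Y j c))))
        by (intros; rewrite fsum_scal; ring).
      rewrite !fsum_add, !fsum_scal. fold G. ring. }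
  eapply Rle_trans; [apply normd_triangle|].
  eapply Rle_trans; [apply Rplus_le_compat_r, normd_triangle|].
  rewrite normd_scal, Rabs_right by (unfold G; lra).
  pose proof (normd_comb d N g (fun m c => q m c - fsum k (fun j => L m j * Y j c)) Hg) as Hcomb.
  assert (Hnear : fsum N (fun m => g m * normd d (fun c => q m c - fsum k (fun j => L m j * Y j c)))
          <= fsum N (fun m => g m * hull_dist k d Y (q m)) + G * eps).
  { unfold G. rewrite (Rmult_comm (fsum N g) eps), <- fsum_scal, <- fsum_add. apply fsum_le.
    intros m Hm. rewrite (Rmult_comm eps), <- Rmult_plus_distr_l. apply Rmult_le_compat_l; auto.
    left. apply (proj2 (HL m)). }
  assert ((1 - G) * normd d (fun c => v c - fsum k (fun j => lv j * Y j c)) <=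
          (1 - G) * (hull_dist k d Y v + eps)) by (apply Rmult_le_compat_l; unfold G; lra).
  simpl in Hcomb. lra.
Qed.

Lemma hull_dist_convex_step_bound Y v (q : nat -> nat -> R) (g : nat -> R) N e V :
  (forall m, (m < N)%nat -> 0 <= g m) -> fsum N g <= 1 ->
  hull_dist k d Y v <= V ->
  (forall m, (m < N)%nat -> 0 < g m -> hull_dist k d Y (q m) <= V) ->
  hull_dist k d Y (fun c => v c + fsum N (fun m => g m * (q m c - v c)) + e c) <= V + normd d e.
Proof.
  intros Hg HG Hv Hq.
  eapply Rle_trans; [apply hull_dist_convex_step; auto|].
  assert (Havg : fsum N (fun m => g m * hull_dist k d Y (q m)) <= fsum N g * V).
  { rewrite Rmult_comm, <- fsum_scal. apply fsum_le. intros m Hm. rewrite (Rmult_comm V).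
    destruct (Rle_lt_or_eq_dec 0 (g m) (Hg m Hm)) as [Hpos|Hzero].
    - apply Rmult_le_compat_l; auto.
    - rewrite <- Hzero. lra. }
  assert ((1 - fsum N g) * hull_dist k d Y v <= (1 - fsum N g) * V) by (apply Rmult_le_compat_l; lra).
  lra.
Qed.

End HullDistance.

(* ** A comparison principle for right Dini derivatives *)

Definition cont_on (F : R -> R) (a b : R) : Prop :=
  forall s, a <= s <= b -> forall eps, 0 < eps -> exists delta, 0 < delta /\
    forall s', a <= s' <= b -> Rabs (s' - s) < delta -> Rabs (F s' - F s) < eps.

(* The upper right Dini derivative of F at s is at most M. *)
Definition dini (F : R -> R) (s M : R) : Prop :=
  forall eps, 0 < eps -> exists delta, 0 < delta /\
    forall h, 0 < h < delta -> F (s + h) - F s <= (M + eps) * h.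

Lemma cont_on_sub F a b a' b' : a <= a' -> b' <= b -> cont_on F a b -> cont_on F a' b'.
Proof.
  intros H1 H2 H s Hs eps He. destruct (H s ltac:(lra) eps He) as [dl [Hd Hd']].
  exists dl; split; auto. intros s' Hs' Hss. apply Hd'; auto; lra.
Qed.

Lemma dini_mono F s M M' : M <= M' -> dini F s M -> dini F s M'.
Proof.
  intros HM H eps He. destruct (H eps He) as [dl [Hd Hd']]. exists dl; split; auto.
  intros h Hh. specialize (Hd' h Hh). nra.
Qed.

Lemma cont_on_minus_linear F M a b : cont_on F a b -> cont_on (fun s => F s - M * s) a b.
Proof.
  intros Hc s Hs eps He. destruct (Hc s Hs (eps / 2) ltac:(lra)) as [dl [Hdl Hdl']].
  set (q := eps / (2 * (Rabs M + 1))).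
  pose proof (Rabs_pos M).
  assert (Hq : 0 < q) by (apply Rdiv_lt_0_compat; lra).
  assert (Hqe : q * (2 * (Rabs M + 1)) = eps) by (unfold q; field; lra).
  exists (Rmin dl q). split; [apply Rmin_glb_lt; lra|].
  intros s' Hs' Hss.
  assert (Hss1 : Rabs (s' - s) < dl) by (eapply Rlt_le_trans; [apply Hss | apply Rmin_l]).
  assert (Hss2 : Rabs (s' - s) < q) by (eapply Rlt_le_trans; [apply Hss | apply Rmin_r]).
  specialize (Hdl' s' Hs' Hss1).
  replace (F s' - M * s' - (F s - M * s)) with ((F s' - F s) + (- M) * (s' - s)) by ring.
  eapply Rle_lt_trans; [apply Rabs_triang|]. rewrite Rabs_mult, Rabs_Ropp.
  assert (Rabs M * Rabs (s' - s) <= Rabs M * q) by (apply Rmult_le_compat_l; lra).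
  nra.
Qed.

Lemma dini_minus_linear F M s : dini F s M -> dini (fun r => F r - M * r) s 0.
Proof.
  intros H eps He. destruct (H eps He) as [dl [Hdl Hdl']]. exists dl; split; auto.
  intros h Hh. specialize (Hdl' h Hh). lra.
Qed.

(* Closed-left version with a positive slope: the set of t where the
   slope bound holds up to t is closed (continuity) and open to the right
   (Dini bound), hence contains e. *)
Lemma slope_bound_closed F a e eps : a <= e -> 0 < eps -> cont_on F a e ->
  (forall s, a <= s < e -> exists delta, 0 < delta /\
     forall h, 0 < h < delta -> F (s + h) - F s <= eps * h) ->
  F e - F a <= eps * (e - a).
Proof.
  intros Hae He Hc Hd.
  set (A := fun t => a <= t <= e /\ F t - F a <= eps * (t - a)).
  assert (Hb : bound A) by (exists e; intros t [Ht _]; lra).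
  assert (Ha : exists t, A t) by (exists a; split; [lra | ring_simplify; lra]).
  destruct (completeness A Hb Ha) as [sg [Hs1 Hs2]].
  assert (Has : a <= sg) by (apply Hs1; split; [lra | ring_simplify; lra]).
  assert (Hse : sg <= e) by (apply Hs2; intros t [Ht _]; lra).
  (* the supremum belongs to A *)
  assert (HA : F sg - F a <= eps * (sg - a)).
  { destruct (Rle_or_lt (F sg - F a) (eps * (sg - a))) as [H|H]; auto. exfalso.
    set (gap := F sg - F a - eps * (sg - a)).
    destruct (Hc sg ltac:(lra) (gap / 2) ltac:(unfold gap; lra)) as [d1 [Hd1 Hd1']].
    assert (sg <= sg - d1); [|lra].
    apply Hs2. intros t [Ht Ht2].
    assert (t <= sg) by (apply Hs1; split; auto).
    destruct (Rle_or_lt t (sg - d1)); auto. exfalso.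
    specialize (Hd1' t Ht ltac:(apply Rabs_def1; lra)). apply Rabs_def2 in Hd1'.
    assert (eps * (t - a) <= eps * (sg - a)) by (apply Rmult_le_compat_l; lra).
    unfold gap in *. lra. }
  destruct (Req_dec sg e) as [->|Hne]; auto.
  (* otherwise A extends beyond its supremum *)
  destruct (Hd sg ltac:(lra)) as [dl [Hdl Hdl']].
  set (h := Rmin dl (e - sg) / 2).
  assert (Hh : 0 < h < dl /\ h <= e - sg).
  { unfold h. pose proof (Rmin_l dl (e - sg)). pose proof (Rmin_r dl (e - sg)).
    assert (0 < Rmin dl (e - sg)) by (apply Rmin_glb_lt; lra). lra. }
  assert (sg + h <= sg); [|lra].
  apply Hs1. split; [lra|]. specialize (Hdl' h ltac:(lra)). lra.
Qed.

(* Open-interval version with slope 0, using continuity at the left end. *)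
Lemma nonincreasing_open F c e : c < e -> cont_on F c e ->
  (forall s, c < s < e -> dini F s 0) -> F e - F c <= 0.
Proof.
  intros Hce Hc Hd. rewrite <- (Rplus_0_r 0). apply Rle_plus_epsilon. intros eta Heta.
  destruct (Hc c ltac:(lra) (eta / 2) ltac:(lra)) as [dl [Hdl Hdl']].
  set (c' := c + Rmin dl (e - c) / 2).
  assert (Hc' : c < c' <= e /\ c' - c < dl).
  { unfold c'. pose proof (Rmin_l dl (e - c)). pose proof (Rmin_r dl (e - c)).
    assert (0 < Rmin dl (e - c)) by (apply Rmin_glb_lt; lra). lra. }
  set (ep := eta / (2 * (e - c))).
  assert (Hep : 0 < ep) by (unfold ep; apply Rdiv_lt_0_compat; lra).
  assert (H1 : F e - F c' <= ep * (e - c')).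
  { apply slope_bound_closed; [lra | lra | apply (cont_on_sub F c e); [lra | lra | exact Hc] |].
    intros s Hs. destruct (Hd s ltac:(lra) ep Hep) as [d2 [Hd2 Hd2']]. exists d2; split; auto.
    intros h Hh. specialize (Hd2' h Hh). lra. }
  assert (H2 : ep * (e - c') <= eta / 2).
  { apply Rle_trans with (ep * (e - c)); [apply Rmult_le_compat_l; lra|].
    unfold ep. right. field. lra. }
  specialize (Hdl' c' ltac:(lra) ltac:(apply Rabs_def1; lra)). apply Rabs_def2 in Hdl'. lra.
Qed.

Lemma slope_bound_open F M c e : c < e -> cont_on F c e ->
  (forall s, c < s < e -> dini F s M) -> F e - F c <= M * (e - c).
Proof.
  intros Hce Hc Hd.
  cut ((F e - M * e) - (F c - M * c) <= 0); [lra|].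
  apply (nonincreasing_open (fun s => F s - M * s)); auto.
  - apply cont_on_minus_linear, Hc.
  - intros s Hs. apply dini_minus_linear, Hd, Hs.
Qed.

Lemma slope_bound_except F M L : forall c e, c <= e -> cont_on F c e ->
  (forall s, c < s < e -> ~ In s L -> dini F s M) -> F e - F c <= M * (e - c).
Proof.
  induction L as [|p L IH]; intros c e Hce Hc Hd.
  - destruct (Req_dec c e) as [->|Hne]; [lra|].
    apply slope_bound_open; [lra | auto |]. intros s Hs; apply Hd; auto.
  - (* on any subinterval avoiding p the induction hypothesis applies *)
    assert (Hpiece : forall c' e', c <= c' -> e' <= e -> (forall s, c' < s < e' -> s <> p) ->
               F e' - F c' <= M * (e' - c') \/ e' < c').
    { intros c' e' H1 H2 Hp. destruct (Rle_or_lt c' e') as [Hle|Hlt]; [left|right; lra].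
      apply IH; [lra | apply (cont_on_sub F c e); auto |].
      intros s Hs Hn. apply Hd; [lra|]. intros [Heq|Hin]; [apply (Hp s); auto | auto]. }
    destruct (Rlt_dec c p) as [H1|H1]; [destruct (Rlt_dec p e) as [H2|H2]|].
    + destruct (Hpiece c p) as [Hl|]; [lra | lra | intros; lra | | lra].
      destruct (Hpiece p e) as [Hr|]; [lra | lra | intros; lra | | lra].
      nra.
    + destruct (Hpiece c e) as [Hl|]; [lra | lra | intros; lra | auto | lra].
    + destruct (Hpiece c e) as [Hl|]; [lra | lra | intros; lra | auto | lra].
Qed.

Lemma slope_bound_step_aux F G K L (f : R -> R) b : 0 <= K -> forall l lf a,
  adapted_couple f a b l lf -> a <= b -> cont_on F a b ->
  (forall s, a < s < b -> G s <= f s) ->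
  (forall s, a < s < b -> ~ In s L -> dini F s (K * G s)) ->
  F b - F a <= K * Int_SF lf l.
Proof.
  intros HK l. induction l as [|r1 l1 IH]; intros lf a Had Hab Hc HG Hd.
  - destruct Had as [_ [_ [_ [Hlen _]]]]. discriminate.
  - destruct l1 as [|r2 l'].
    + destruct Had as [_ [H0 [H1 [Hlen _]]]]. simpl in H0, H1.
      rewrite Rmin_left in H0 by lra. rewrite Rmax_right in H1 by lra.
      destruct lf; [|discriminate]. simpl. subst. lra.
    + destruct lf as [|r3 lf']; [destruct Had as [_ [_ [_ [Hlen _]]]]; discriminate|].
      pose proof (StepFun_P7 Hab Had) as Had'.
      destruct Had as [Hord [H0 [_ [_ Hcst]]]]. simpl in H0. rewrite Rmin_left in H0 by lra. subst r1.
      assert (Har2 : a <= r2) by (apply (Hord 0%nat); simpl; lia).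
      assert (Hr2b : r2 <= b) by (destruct Had' as [_ [H0' _]]; simpl in H0'; rewrite H0'; apply Rmin_r).
      pose proof (Hcst 0%nat ltac:(simpl; lia)) as Hc0. simpl in Hc0.
      simpl Int_SF.
      (* on the first subinterval f is the constant r3 >= G *)
      assert (F r2 - F a <= (K * r3) * (r2 - a)).
      { apply (slope_bound_except F (K * r3) L); auto.
        - apply (cont_on_sub F a b); [lra | lra | exact Hc].
        - intros s Hs Hn. apply (dini_mono F s (K * G s)); [|apply Hd; auto; lra].
          apply Rmult_le_compat_l; auto. rewrite <- (Hc0 s); [apply HG; lra|]. unfold open_interval; lra. }
      assert (F b - F r2 <= K * Int_SF lf' (r2 :: l')).
      { apply IH; auto; [apply (cont_on_sub F a b); [lra | lra | exact Hc] | |].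
        - intros s Hs; apply HG; lra.
        - intros s Hs Hn; apply Hd; auto; lra. }
      lra.
Qed.

Lemma slope_bound_step F G K L a b (f : StepFun a b) : a <= b -> 0 <= K -> cont_on F a b ->
  (forall s, a < s < b -> G s <= f s) ->
  (forall s, a < s < b -> ~ In s L -> dini F s (K * G s)) ->
  F b - F a <= K * RiemannInt_SF f.
Proof.
  intros Hab HK Hc HG Hd. unfold RiemannInt_SF. destruct (Rle_dec a b) as [_|Hn]; [|lra].
  apply (slope_bound_step_aux F G K L f b HK _ _ a); auto. apply StepFun_P1.
Qed.

Lemma dini_integral_bound F G K L a b (pr : Riemann_integrable G a b) :
  a <= b -> 0 <= K -> cont_on F a b ->
  (forall s, a < s < b -> ~ In s L -> dini F s (K * G s)) ->
  F b - F a <= K * RiemannInt pr.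
Proof.
  intros Hab HK Hc Hd.
  (* bound against the upper step functions phi_N + psi_N *)
  assert (Hn : forall N, F b - F a <= K * (RiemannInt_SF (phi_sequence RinvN pr N) + RinvN N)).
  { intros N. destruct (phi_sequence_prop RinvN pr N) as [psi [H1 H2]].
    set (phi := phi_sequence RinvN pr N) in *.
    eapply Rle_trans.
    - apply (slope_bound_step F G K L a b (mkStepFun (StepFun_P28 1 phi psi))); auto.
      intros s Hs. simpl. specialize (H1 s). rewrite Rmin_left, Rmax_right in H1 by lra.
      specialize (H1 ltac:(lra)). pose proof (Rle_abs (G s - phi s)). lra.
    - rewrite StepFun_P30. apply Rmult_le_compat_l; auto.
      pose proof (Rle_abs (RiemannInt_SF psi)). lra. }
  unfold RiemannInt. destruct (RiemannInt_exists pr RinvN RinvN_cv) as [I HI].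
  apply Rle_plus_epsilon. intros eps He.
  set (e' := eps / (2 * (K + 1))).
  assert (He' : 0 < e') by (unfold e'; apply Rdiv_lt_0_compat; lra).
  assert (He'K : K * (2 * e') <= eps).
  { assert (e' * (2 * (K + 1)) = eps) by (unfold e'; field; lra). nra. }
  destruct (HI e' He') as [N1 HN1]. destruct (@RinvN_cv e' He') as [N2 HN2].
  specialize (HN1 (max N1 N2) ltac:(lia)). specialize (HN2 (max N1 N2) ltac:(lia)).
  unfold Rdist in HN1, HN2. rewrite Rminus_0_r in HN2.
  apply Rabs_def2 in HN1. pose proof (Rle_abs (RinvN (max N1 N2))).
  specialize (Hn (max N1 N2)).
  assert (K * (RiemannInt_SF (phi_sequence RinvN pr (max N1 N2)) + RinvN (max N1 N2))
          <= K * (I + 2 * e')) by (apply Rmult_le_compat_l; lra).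
  nra.
Qed.

(* ** Uniform choices over finitely many coordinates *)

Lemma common_delta (P : nat -> R -> Prop) N :
  (forall m dl dl', P m dl -> 0 < dl' <= dl -> P m dl') ->
  (forall m, (m < N)%nat -> exists dl, 0 < dl /\ P m dl) ->
  exists dl, 0 < dl /\ forall m, (m < N)%nat -> P m dl.
Proof.
  intros Hmono. induction N as [|N IH]; intros H; [exists 1; split; [lra | intros; lia]|].
  destruct IH as [d1 [Hd1 H1]]; [intros m Hm; apply H; lia|].
  destruct (H N ltac:(lia)) as [d2 [Hd2 H2]].
  pose proof (Rmin_l d1 d2). pose proof (Rmin_r d1 d2).
  assert (0 < Rmin d1 d2) by (apply Rmin_glb_lt; auto).
  exists (Rmin d1 d2). split; auto.
  intros m Hm. destruct (Nat.eq_dec m N) as [->|Hne].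
  - eapply Hmono; [apply H2 | lra].
  - eapply Hmono; [apply H1; lia | lra].
Qed.

Lemma common_delta2 (P : nat -> nat -> R -> Prop) N D :
  (forall i c dl dl', P i c dl -> 0 < dl' <= dl -> P i c dl') ->
  (forall i c, (i < N)%nat -> (c < D)%nat -> exists dl, 0 < dl /\ P i c dl) ->
  exists dl, 0 < dl /\ forall i c, (i < N)%nat -> (c < D)%nat -> P i c dl.
Proof.
  intros Hmono H.
  destruct (common_delta (fun i dl => forall c, (c < D)%nat -> P i c dl) N) as [dl [Hdl Hall]].
  - intros i dl dl' Hi Hdl c Hc. eapply Hmono; eauto.
  - intros i Hi. apply common_delta; [intros; eapply Hmono; eauto | auto].
  - exists dl. split; auto.
Qed.

Lemma coords_uniform_cont N D (f : R -> nat -> nat -> R) s eps :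
  (forall i c, (i < N)%nat -> (c < D)%nat -> cont_nonneg (fun t => f t i c)) ->
  0 <= s -> 0 < eps ->
  exists dl, 0 < dl /\ forall s', 0 <= s' -> Rabs (s' - s) < dl ->
    forall i c, (i < N)%nat -> (c < D)%nat -> Rabs (f s' i c - f s i c) < eps.
Proof.
  intros Hf Hs He.
  destruct (common_delta2 (fun i c dl => forall s', 0 <= s' -> Rabs (s' - s) < dl ->
              Rabs (f s' i c - f s i c) < eps) N D) as [dl [Hdl H]].
  - intros i c dl dl' H [H1 H2] s' Hs' Hss. apply H; auto; lra.
  - intros i c Hi Hc. exact (Hf i c Hi Hc s eps Hs He).
  - exists dl; auto.
Qed.

Lemma deriv_right_error f s l eta : derivable_pt_lim f s l -> 0 < eta ->
  exists dl, 0 < dl /\ forall h, 0 < h < dl -> Rabs (f (s + h) - f s - h * l) <= eta * h.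
Proof.
  intros Hf He. destruct (Hf eta He) as [dl Hdl]. exists dl. split; [apply cond_pos|].
  intros h Hh. specialize (Hdl h ltac:(lra) ltac:(rewrite Rabs_right; lra)).
  replace (f (s + h) - f s - h * l) with (h * ((f (s + h) - f s) / h - l)) by (field; lra).
  rewrite Rabs_mult, Rabs_right by lra. rewrite Rmult_comm. apply Rmult_le_compat_r; lra.
Qed.

Lemma coords_uniform_deriv N D (f : R -> nat -> nat -> R) (l : nat -> nat -> R) s eta :
  (forall i c, (i < N)%nat -> (c < D)%nat -> derivable_pt_lim (fun r => f r i c) s (l i c)) ->
  0 < eta ->
  exists dl, 0 < dl /\ forall h, 0 < h < dl ->
    forall i c, (i < N)%nat -> (c < D)%nat -> Rabs (f (s + h) i c - f s i c - h * l i c) <= eta * h.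
Proof.
  intros Hf He.
  destruct (common_delta2 (fun i c dl => forall h, 0 < h < dl ->
              Rabs (f (s + h) i c - f s i c - h * l i c) <= eta * h) N D) as [dl [Hdl H]].
  - intros i c dl dl' H [H1 H2] h Hh. apply H; lra.
  - intros i c Hi Hc. apply (deriv_right_error (fun r => f r i c)); auto.
  - exists dl; auto.
Qed.

(* ** The followers of V^1_F along a trajectory of system (5) *)

Definition subset_hull_dist (n k d : nat) (V1 : nat -> Prop) (X Y : nat -> nat -> R) : R :=
  fmax n (fun j => if excluded_middle_informative (V1 j) then hull_dist k d Y (X j) else 0).

Lemma subset_hull_dist_ge n k d V1 X Y j : (j < n)%nat -> V1 j ->
  hull_dist k d Y (X j) <= subset_hull_dist n k d V1 X Y.
Proof.
  intros Hj HVj. eapply Rle_trans; [|apply (fmax_ge _ _ j Hj)]. cbv beta.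
  destruct (excluded_middle_informative (V1 j)); [lra | contradiction].
Qed.

Lemma subset_hull_dist_le n k d V1 X Y C : 0 <= C ->
  (forall j, (j < n)%nat -> V1 j -> hull_dist k d Y (X j) <= C) ->
  subset_hull_dist n k d V1 X Y <= C.
Proof.
  intros HC H. apply fmax_le; auto. intros j Hj.
  destruct (excluded_middle_informative (V1 j)); auto.
Qed.

Lemma subset_hull_dist_diff n k d V1 X X' Y Y' r : (1 <= k)%nat -> 0 <= r ->
  (forall j, (j < n)%nat ->
     normd d (fun c => X' j c - X j c) + mat_norm k d (fun j c => Y' j c - Y j c) <= r) ->
  Rabs (subset_hull_dist n k d V1 X' Y' - subset_hull_dist n k d V1 X Y) <= r.
Proof.
  intros Hk Hr H. apply fmax_diff; auto. intros j Hj.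
  destruct (excluded_middle_informative (V1 j)).
  - eapply Rle_trans; [apply hull_dist_diff; auto | apply H; auto].
  - rewrite Rminus_0_r, Rabs_R0. lra.
Qed.

Section SystemFive.
Variables (n k d : nat) (GF GL : nat -> nat -> nat -> bool) (sigma : R -> nat).
Variables (u : nat -> (nat -> nat -> R) -> R -> nat -> R) (w : nat -> R -> nat -> R).
Variables (a b : nat -> nat -> (nat -> nat -> R) -> (nat -> nat -> R) -> R -> R).
Variables (x y : R -> nat -> nat -> R).
Hypothesis Hk : (1 <= k)%nat.
Hypothesis Ha : forall i j X Y t, (i < n)%nat -> (j < n)%nat -> 0 <= a i j X Y t.
Hypothesis Hb : forall i j X Y t, (i < n)%nat -> (j < k)%nat -> 0 <= b i j X Y t.

Definition in_weight (X Y : nat -> nat -> R) (t : R) (i : nat) : R :=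
  fsum n (fun m => if GF (sigma t) m i then a i m X Y t else 0)
  + fsum k (fun m => if GL (sigma t) m i then b i m X Y t else 0).

Lemma in_weight_nonneg X Y t i : (i < n)%nat -> 0 <= in_weight X Y t i.
Proof.
  intros Hi. unfold in_weight. apply Rplus_le_le_0_compat; apply fsum_nonneg; intros m Hm.
  - destruct (GF (sigma t) m i); [apply Ha | lra]; auto.
  - destruct (GL (sigma t) m i); [apply Hb | lra]; auto.
Qed.

(* An Euler step of system (5) for follower i, of length h with h times the
   entering weight at most 1, is a convex step towards its neighbours plus
   h w_i. *)
Lemma euler_step_hull X Y t i h V : (i < n)%nat -> 0 <= h -> h * in_weight X Y t i <= 1 ->
  hull_dist k d Y (X i) <= V ->
  (forall m, (m < n)%nat -> GF (sigma t) m i = true -> hull_dist k d Y (X m) <= V) ->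
  hull_dist k d Y (fun c => X i c + h * follower_rhs n k GF GL sigma a b w X Y t i c)
  <= V + h * normd d (w i t).
Proof.
  intros Hi Hh Hweight HXi Hnbr.
  (* neighbours indexed by m < n + k: followers first, then leaders *)
  set (g := fun m => h * (if Nat.ltb m n then (if GF (sigma t) m i then a i m X Y t else 0)
                          else (if GL (sigma t) (m - n)%nat i then b i (m - n)%nat X Y t else 0))).
  set (q := fun m => if Nat.ltb m n then X m else Y (m - n)%nat).
  assert (Hsplit : forall (F : nat -> R), fsum (n + k) F = fsum n F + fsum k (fun m => F (n + m)%nat))
    by apply fsum_split.
  assert (Hfol : forall m, (m < n)%nat -> Nat.ltb m n = true) by (intros; apply Nat.ltb_lt; auto).
  assert (Hlead : forall m, Nat.ltb (n + m) n = false) by (intros; apply Nat.ltb_ge; lia).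
  assert (Hsub : forall m, (n + m - n = m)%nat) by (intros; lia).
  assert (Hg : forall m, (m < n + k)%nat -> 0 <= g m).
  { intros m Hm. apply Rmult_le_pos; auto. destruct (Nat.ltb_spec m n).
    - destruct (GF (sigma t) m i); [apply Ha | lra]; auto.
    - destruct (GL (sigma t) (m - n)%nat i); [apply Hb; lia | lra]. }
  assert (HG : fsum (n + k) g = h * in_weight X Y t i).
  { rewrite Hsplit. unfold in_weight. rewrite Rmult_plus_distr_l, <- !fsum_scal. f_equal.
    - apply fsum_ext. intros m Hm. unfold g. rewrite Hfol; auto.
    - apply fsum_ext. intros m Hm. unfold g. rewrite Hlead, Hsub. reflexivity. }
  assert (Hstep : (fun c => X i c + h * follower_rhs n k GF GL sigma a b w X Y t i c) =
     (fun c => X i c + fsum (n + k) (fun m => g m * (q m c - X i c)) + h * w i t c)).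
  { apply functional_extensionality. intros c. rewrite Hsplit. unfold follower_rhs.
    rewrite (fsum_ext n (fun m => g m * (q m c - X i c)) (fun m => h * (if GF (sigma t) m i then a i m X Y t * (X m c - X i c) else 0))).
    2:{ intros m Hm. unfold g, q. rewrite Hfol by auto. destruct (GF (sigma t) m i); ring. }
    rewrite (fsum_ext k (fun m => g (n + m)%nat * (q (n + m)%nat c - X i c)) (fun m => h * (if GL (sigma t) m i then b i m X Y t * (Y m c - X i c) else 0))).
    2:{ intros m Hm. unfold g, q. rewrite Hlead, Hsub. destruct (GL (sigma t) m i); ring. }
    rewrite !fsum_scal. ring. }
  rewrite Hstep.
  replace (h * normd d (w i t)) with (normd d (fun c => h * w i t c))
    by (rewrite normd_scal, Rabs_right; lra).
  apply (hull_dist_convex_step_bound k d Hk Y (X i) q g (n + k) (fun c => h * w i t c) V Hg);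
    [rewrite HG; auto | auto |].
  intros m Hm Hgm. unfold q. destruct (Nat.ltb_spec m n) as [Hmn|Hmn].
  - apply Hnbr; auto. unfold g in Hgm. rewrite Hfol in Hgm by auto.
    destruct (GF (sigma t) m i); [reflexivity | lra].
  - rewrite hull_dist_vertex by (auto; lia). pose proof (hull_dist_nonneg k d Hk Y (X i)). lra.
Qed.


Lemma subset_hull_dist_cont V1 lo hi : 0 <= lo ->
  (forall i c, (i < n)%nat -> (c < d)%nat -> cont_nonneg (fun t => x t i c)) ->
  (forall j c, (j < k)%nat -> (c < d)%nat -> cont_nonneg (fun t => y t j c)) ->
  cont_on (fun s => subset_hull_dist n k d V1 (x s) (y s)) lo hi.
Proof.
  intros Hlo Hxc Hyc s Hs eps He.
  pose proof (pos_INR d). pose proof (pos_INR k).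
  set (eta := eps / (2 * (INR d + INR k * INR d + 1))).
  assert (Heta : 0 < eta) by (unfold eta; apply Rdiv_lt_0_compat; nra).
  assert (Heta_eps : eta * (2 * (INR d + INR k * INR d + 1)) = eps) by (unfold eta; field; nra).
  destruct (coords_uniform_cont n d x s eta Hxc ltac:(lra) Heta) as [dx [Hdx Hx]].
  destruct (coords_uniform_cont k d y s eta Hyc ltac:(lra) Heta) as [dy [Hdy Hy]].
  exists (Rmin dx dy). split; [apply Rmin_glb_lt; auto|].
  intros s' Hs' Hss.
  assert (Hss1 : Rabs (s' - s) < dx) by (eapply Rlt_le_trans; [apply Hss | apply Rmin_l]).
  assert (Hss2 : Rabs (s' - s) < dy) by (eapply Rlt_le_trans; [apply Hss | apply Rmin_r]).
  assert (0 <= INR d * eta) by (apply Rmult_le_pos; lra).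
  assert (0 <= INR k * (INR d * eta)) by (apply Rmult_le_pos; lra).
  apply Rle_lt_trans with (INR d * eta + INR k * (INR d * eta)); [|nra].
  apply subset_hull_dist_diff; auto; [lra|]. intros j Hj. apply Rplus_le_compat.
  - apply normd_coord_bound. intros c Hc. left. apply Hx; auto; lra.
  - apply mat_norm_coord_bound. intros j' c Hj' Hc. left. apply Hy; auto; lra.
Qed.

(* At a time s where both equations of (5) hold and no follower outside V1
   sends to V1, the right Dini derivative of L is at most |u| + |w|, hence at
   most sqrt 2 |z(s)|: compare x(s+h), y(s+h) with the Euler step of length h. *)
Lemma subset_hull_dist_dini V1 s :
  (forall j i, (j < n)%nat -> ~ V1 j -> V1 i -> GF (sigma s) j i = false) ->
  (forall j c, (j < k)%nat -> (c < d)%nat ->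
     derivable_pt_lim (fun r => y r j c) s (u j (y s) s c)) ->
  (forall i c, (i < n)%nat -> (c < d)%nat ->
     derivable_pt_lim (fun r => x r i c) s (follower_rhs n k GF GL sigma a b w (x s) (y s) s i c)) ->
  dini (fun r => subset_hull_dist n k d V1 (x r) (y r)) s (sqrt 2 * z_norm n k d u w y s).
Proof.
  intros Hnoarc HDy HDx eps He.
  set (X := x s). set (Y := y s). set (Ls := subset_hull_dist n k d V1 X Y).
  pose proof (pos_INR d). pose proof (pos_INR k).
  set (eta := eps / (INR d + INR k * INR d + 1)).
  assert (Heta : 0 < eta) by (unfold eta; apply Rdiv_lt_0_compat; nra).
  assert (Heta_eps : eta * (INR d + INR k * INR d + 1) = eps) by (unfold eta; field; nra).
  destruct (coords_uniform_deriv n d x (follower_rhs n k GF GL sigma a b w X Y s) s eta HDx Heta)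
    as [dx [Hdx Hx]].
  destruct (coords_uniform_deriv k d y (fun j c => u j Y s c) s eta HDy Heta) as [dy [Hdy Hy]].
  set (Amax := fsum n (in_weight X Y s)).
  assert (HW : forall i, (i < n)%nat -> in_weight X Y s i <= Amax).
  { intros i Hi. apply (fsum_term_le n (in_weight X Y s)); auto. intros; apply in_weight_nonneg; auto. }
  assert (HAmax : 0 <= Amax) by (apply fsum_nonneg; intros; apply in_weight_nonneg; auto).
  set (Un := mat_norm k d (fun j c => u j Y s c)). set (Wn := mat_norm n d (fun i c => w i s c)).
  assert (Hz : Un + Wn <= sqrt 2 * z_norm n k d u w y s)
    by (apply sqrt_add_le; apply fsum_nonneg; intros; apply fsum_squares_nonneg).
  assert (HUW : 0 <= Un + Wn) by (apply Rplus_le_le_0_compat; apply sqrt_pos).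
  exists (Rmin dx (Rmin dy (/ (Amax + 1)))).
  split; [repeat apply Rmin_glb_lt; auto; apply Rinv_0_lt_compat; lra|].
  intros h [Hh0 Hh].
  assert (Hhx : h < dx) by (eapply Rlt_le_trans; [apply Hh | apply Rmin_l]).
  assert (Hhy : h < dy) by (eapply Rlt_le_trans; [apply Hh | eapply Rle_trans; [apply Rmin_r | apply Rmin_l]]).
  assert (HhA : h * (Amax + 1) < 1).
  { apply Rlt_le_trans with (/ (Amax + 1) * (Amax + 1)); [|rewrite Rinv_l by lra; lra].
    apply Rmult_lt_compat_r; [lra|].
    eapply Rlt_le_trans; [apply Hh | eapply Rle_trans; [apply Rmin_r | apply Rmin_r]]. }
  assert (Herr : INR d * (eta * h) + INR k * (INR d * (eta * h)) <= eps * h) by nra.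
  assert (Hgrowth : h * (Un + Wn) <= h * (sqrt 2 * z_norm n k d u w y s)) by (apply Rmult_le_compat_l; lra).
  assert (HLs : 0 <= Ls) by apply fmax_nonneg.
  cut (subset_hull_dist n k d V1 (x (s + h)) (y (s + h)) <= Ls + h * (Un + Wn) + eps * h); [lra|].
  apply subset_hull_dist_le; [nra|]. intros j Hj HVj.
  set (euler := fun c => X j c + h * follower_rhs n k GF GL sigma a b w X Y s j c).
  assert (Hstep : hull_dist k d Y euler <= Ls + h * normd d (w j s)).
  { assert (h * in_weight X Y s j <= h * (Amax + 1))
      by (apply Rmult_le_compat_l; [lra | pose proof (HW j Hj); lra]).
    apply euler_step_hull; auto; [lra | lra | apply subset_hull_dist_ge; auto |].
    intros m Hm Harc. apply subset_hull_dist_ge; auto.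
    destruct (Classical_Prop.classic (V1 m)) as [HVm|HVm]; auto.
    rewrite (Hnoarc m j Hm HVm HVj) in Harc. discriminate. }
  assert (Heuler : normd d (fun c => x (s + h) j c - euler c) <= INR d * (eta * h)).
  { apply normd_coord_bound. intros c Hc. unfold euler, X.
    replace (x (s + h) j c - (x s j c + h * follower_rhs n k GF GL sigma a b w (x s) Y s j c))
      with (x (s + h) j c - x s j c - h * follower_rhs n k GF GL sigma a b w X Y s j c) by (unfold X; ring).
    apply Hx; auto; lra. }
  assert (Hleaders : mat_norm k d (fun j c => y (s + h) j c - Y j c) <= h * Un + INR k * (INR d * (eta * h)))
    by (apply increment_norm_bound; [lra | intros j' c Hj' Hc; apply Hy; auto; lra]).
  assert (Hwj : normd d (w j s) <= Wn) by (apply (mat_norm_row n d (fun i c => w i s c)); auto).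
  pose proof (hull_dist_lip k d Hk Y (y (s + h)) euler (x (s + h) j)).
  nra.
Qed.

End SystemFive.
Theorem lemma12
  (n k d : nat) (Hn : (2 <= n)%nat) (Hk : (1 <= k)%nat) (Hd : (1 <= d)%nat)
  (* finite set P = {0,...,p-1} of digraphs, switching signal with dwell time *)
  (p : nat) (GF GL : nat -> nat -> nat -> bool)
  (tauD : R) (HtauD : 0 < tauD)
  (sigma : R -> nat) (Hsigma : switching_signal p tauD sigma)
  (* leader inputs, disturbances, weights *)
  (u : nat -> (nat -> nat -> R) -> R -> nat -> R)
  (Hu_y : forall j, (j < k)%nat -> cont_in_y k d (u j))
  (Hu_t : forall j Y c, (j < k)%nat -> (c < d)%nat ->
            piecewise_cont (fun t => u j Y t c))
  (w : nat -> R -> nat -> R)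
  (Hw : forall i c, (i < n)%nat -> (c < d)%nat -> continuity (fun t => w i t c))
  (a b : nat -> nat -> (nat -> nat -> R) -> (nat -> nat -> R) -> R -> R)
  (a_lo a_hi b_lo : R) (Ha_lo : 0 < a_lo) (Ha_lohi : a_lo <= a_hi) (Hb_lo : 0 < b_lo)
  (Ha_cont : forall i j, (i < n)%nat -> (j < n)%nat -> cont_state n k d (a i j))
  (Hb_cont : forall i j, (i < n)%nat -> (j < k)%nat -> cont_state n k d (b i j))
  (Ha_bnd : forall i j X Y t, (i < n)%nat -> (j < n)%nat ->
              a_lo <= a i j X Y t <= a_hi)
  (Hb_bnd : forall i j X Y t, (i < n)%nat -> (j < k)%nat -> b_lo <= b i j X Y t)
  (* constants *)
  (That eps0 c0 : R) (HThat : 0 < That) (Heps0 : 0 < eps0 < 1) (Hc0 : 0 < c0)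
  (* trajectory *)
  (x y : R -> nat -> nat -> R)
  (Htraj : is_trajectory n k d GF GL sigma u a b w x y)
  (t0 t1 : R) (Ht0 : 0 <= t0) (Ht01 : t0 <= t1)
  (* the nonempty follower subset V^1_F *)
  (V1 : nat -> Prop) (HV1 : forall i, V1 i -> (i < n)%nat) (HV1ne : exists i, V1 i)
  (* no arc of G([t1, t1+That)) from V_F \ V^1_F into V^1_F *)
  (Hnoarc : forall t j i, t1 <= t < t1 + That -> (j < n)%nat -> ~ V1 j -> V1 i ->
              GF (sigma t) j i = false)
  (Hinit : forall i, V1 i ->
     hull_dist k d (y t1) (x t1 i) <= eps0 * max_hull_dist n k d (x t0) (y t0) + c0) :
  forall i t, V1 i -> t1 <= t <= t1 + That ->
    forall pr : Riemann_integrable (z_norm n k d u w y) t1 t,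
      hull_dist k d (y t) (x t i)
        <= eps0 * max_hull_dist n k d (x t0) (y t0) + c0 + sqrt 2 * RiemannInt pr.
Proof.
  intros i t HVi Ht pr.
  destruct Htraj as [Hxc [Hyc [E [HEfin HEder]]]].
  set (L := fun s => subset_hull_dist n k d V1 (x s) (y s)).
  set (Mx := eps0 * max_hull_dist n k d (x t0) (y t0) + c0).
  assert (Ha : forall i j X Y t, (i < n)%nat -> (j < n)%nat -> 0 <= a i j X Y t)
    by (intros i' j X Y s Hi' Hj; pose proof (Ha_bnd i' j X Y s Hi' Hj); lra).
  assert (Hb : forall i j X Y t, (i < n)%nat -> (j < k)%nat -> 0 <= b i j X Y t)
    by (intros i' j X Y s Hi' Hj; pose proof (Hb_bnd i' j X Y s Hi' Hj); lra).
  assert (HL1 : L t1 <= Mx).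
  { pose proof (fmax_nonneg n (fun j => hull_dist k d (y t0) (x t0 j))).
    apply subset_hull_dist_le; [unfold Mx, max_hull_dist; nra | auto]. }
  assert (Hgrowth : L t - L t1 <= sqrt 2 * RiemannInt pr).
  { destruct (HEfin t) as [Lexc HLexc].
    apply (dini_integral_bound L (z_norm n k d u w y) (sqrt 2) Lexc); [lra | apply sqrt_pos | |].
    - apply subset_hull_dist_cont; auto; lra.
    - intros s Hs HnL.
      assert (HnE : ~ E s) by (intro HE; apply HnL, HLexc; auto; lra).
      destruct (HEder s ltac:(lra) HnE) as [HDy HDx].
      apply (subset_hull_dist_dini n k d GF GL sigma u w a b x y Hk Ha Hb); auto.
      intros j i' Hj HVj HVi'. apply Hnoarc; auto; lra. }
  pose proof (subset_hull_dist_ge n k d V1 (x t) (y t) i (HV1 i HVi) HVi).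
  unfold L, Mx in *. lra.
Qed.
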